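(* Let $(X,\langle\cdot,\cdot\rangle)$ be a real inner product space. For every $n\ge 2$, the $n$-iterated $2$-inner product $(\cdot,\cdot\mid\cdot,\ldots,\cdot)_*:X^{n+1}\to\mathbb{R}$ is a weak $n$-inner product on $X$.
   Context: The $n$-iterated $2$-inner product is defined recursively: for $n=2$, $(x,y\mid z)_*:=\langle x,y\rangle\langle z,z\rangle-\langle x,z\rangle\langle z,y\rangle$; for $n\ge3$ and $x,y,x_2,\ldots,x_n\in X$, $(x,y\mid x_n,\ldots,x_2)_*:=(x,y\mid x_{n-1},\ldots,x_2)_*\,(x_n,x_n\mid x_{n-1},\ldots,x_2)_*-(x,x_n\mid x_{n-1},\ldots,x_2)_*\,(x_n,y\mid x_{n-1},\ldots,x_2)_*$. A weak $n$-inner product ($n\ge2$) on a real vector space $X$ is a function $(\cdot,\cdot\mid\cdot,\ldots,\cdot):X^{n+1}\to\mathbb{R}$, written $(x,y\mid x_n,\ldots,x_2)$, such that for all $x,x',y,x_2,\ldots,x_n\in X$ and $\alpha\in\mathbb{R}$: (P1) $(x,x\mid x_n,\ldots,x_2)\ge 0$, with equality if and only if $x,x_2,\ldots,x_n$ are linearly dependent; (P2) $(x,x\mid x_n,\ldots,x_2)=(x_n,x_n\mid x,x_{n-1},\ldots,x_2)$; (P3) $(x,y\mid x_n,\ldots,x_2)=(y,x\mid x_n,\ldots,x_2)$; (P4) $(\alpha x,y\mid x_n,\ldots,x_2)=\alpha(x,y\mid x_n,\ldots,x_2)$; (P5) $(x+x',y\mid x_n,\ldots,x_2)=(x,y\mid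 x_n,\ldots,x_2)+(x',y\mid x_n,\ldots,x_2)$. *)

From HB Require Import structures.
From mathcomp Require Import all_boot all_order all_algebra.
From mathcomp Require Import reals.
Set Implicit Arguments. Unset Strict Implicit. Unset Printing Implicit Defensive.
Import Order.TTheory GRing.Theory Num.Theory.
Local Open Scope ring_scope.

Definition is_inner_product (R : realType) (X : lmodType R) (ip : X -> X -> R) : Prop :=
  [/\ (forall x y, ip x y = ip y x),
      (forall a x y, ip (a *: x) y = a * ip x y),
      (forall x x' y, ip (x + x') y = ip x y + ip x' y),
      (forall x, 0 <= ip x x) &
      (forall x, ip x x = 0 -> x = 0)].

(* The list s = [:: x_n; x_(n-1); ...; x_2]
   (of length n-1) encodes the arguments after the bar:
     iter2ip ip x y s = (x, y | x_n, ..., x_2)_* .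
   The empty list gives <x,y>, so that for s = [:: z] one gets exactly
   <x,y><z,z> - <x,z><z,y>, and the recursive clause is the paper's. *)
Fixpoint iter2ip (R : realType) (X : lmodType R) (ip : X -> X -> R)
    (x y : X) (s : seq X) : R :=
  match s with
  | [::] => ip x y
  | z :: t => iter2ip ip x y t * iter2ip ip z z t - iter2ip ip x z t * iter2ip ip z y t
  end.

Definition lin_dep (R : realType) (X : lmodType R) (l : seq X) : Prop :=
  exists c : 'I_(size l) -> R,
    (exists i, c i != 0) /\ \sum_(i < size l) c i *: l`_i = 0.

(* Weak n-inner product: f x y s = (x, y | x_n, ..., x_2) where
   s = [:: x_n; ...; x_2] has length n-1. *)
Definition is_weak_n_inner_product (R : realType) (X : lmodType R) (n : nat)
    (f : X -> X -> seq X -> R) : Prop :=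
  [/\ (forall x s, size s = n.-1 ->
                  0 <= f x x s /\ (f x x s = 0 <-> lin_dep (x :: s))),
      (forall x xn t, size t = n.-2 -> f x x (xn :: t) = f xn xn (x :: t)),
      (forall x y s, size s = n.-1 -> f x y s = f y x s),
      (forall a x y s, size s = n.-1 -> f (a *: x) y s = a * f x y s) &
      (forall x x' y s, size s = n.-1 -> f (x + x') y s = f x y s + f x' y s)].

From HB Require Import structures.
From mathcomp Require Import all_boot all_order all_algebra.
From mathcomp Require Import reals.
From mathcomp Require Import ring lra.
Set Implicit Arguments. Unset Strict Implicit. Unset Printing Implicit Defensive.
Import Order.TTheory GRing.Theory Num.Theory.
Local Open Scope ring_scope.

(* By induction on the list x_n, ..., x_2 after the bar, (x, y | x_n, ..., x_2)_*
   is a symmetric, bilinear, positive semidefinite form in (x, y) whose isotropic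
   vectors are exactly the x for which x, x_2, ..., x_n are linearly dependent.
   The recursion replaces such a form g by the Gram minor
   g(x,y) g(z,z) - g(x,z) g(z,y).  Isotropic vectors of a semidefinite form are
   orthogonal to everything, so if g(z,z) = 0 the minor vanishes on the diagonal;
   otherwise it equals g(z,z) g(w,w) for the projection w = x - (g(x,z)/g(z,z)) z,
   and w is isotropic iff x lies in span(z, x_2, ..., x_n) or x_2, ..., x_n are
   already dependent. *)

Section LinearDependence.
Variables (R : realType) (X : lmodType R).

Definition in_span (x : X) (s : seq X) : Prop :=
  exists c : 'I_(size s) -> R, x = \sum_(i < size s) c i *: s`_i.

Definition coef_cons n (a : R) (c : 'I_n -> R) (i : 'I_n.+1) : R :=
  if unlift ord0 i is Some j then c j else a.

Lemma sum_coef_cons (x : X) (s : seq X) a (c : 'I_(size s) -> R) :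
  \sum_(i < size (x :: s)) coef_cons a c i *: (x :: s)`_i
    = a *: x + \sum_(i < size s) c i *: s`_i.
Proof.
rewrite big_ord_recl /coef_cons unlift_none.
by under eq_bigr => j _ do rewrite liftK.
Qed.

Lemma lin_dep_consP (x : X) (s : seq X) :
  lin_dep (x :: s) <-> lin_dep s \/ in_span x s.
Proof.
split.
- case=> c [[i ci]]; rewrite big_ord_recl.
  have [c0|c0] := eqVneq (c ord0) 0.
    rewrite c0 scale0r add0r => hs; left.
    exists (fun j => c (lift ord0 j)); split => //.
    by case: (unliftP ord0 i) ci => [j ->|->]; [exists j | rewrite c0 eqxx].
  move=> /eqP; rewrite addr_eq0 => /eqP /(congr1 ( *:%R (c ord0)^-1)).
  rewrite scalerA mulVf // scale1r /= => ->; right.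
  exists (fun j => - (c ord0)^-1 * c (lift ord0 j)).
  by rewrite scalerN -scaleNr scaler_sumr; apply: eq_bigr => j _; rewrite scalerA.
- case=> [[c [nz_c hs]]|[c hx]].
    exists (coef_cons 0 c); split; last by rewrite sum_coef_cons scale0r add0r.
    by case: nz_c => j cj; exists (lift ord0 j); rewrite /coef_cons liftK.
  exists (coef_cons (-1) c); split.
    by exists ord0; rewrite /coef_cons unlift_none oppr_eq0 oner_neq0.
  by rewrite sum_coef_cons scaleN1r -hx addNr.
Qed.

Lemma lin_dep1 (x : X) : lin_dep [:: x] <-> x = 0.
Proof.
rewrite lin_dep_consP; split.
- by case=> [[c [[[]]]]|[c ->]]; rewrite ?big_ord0.
- by move=> ->; right; exists (fun _ => 0); rewrite big_ord0.
Qed.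

Lemma in_span_cons (x z : X) (t : seq X) :
  in_span x (z :: t) <-> exists a, in_span (x - a *: z) t.
Proof.
split.
- case=> c ->; exists (c ord0), (fun j => c (lift ord0 j)).
  by rewrite big_ord_recl /= addrC addKr.
- case=> a [c hx]; exists (coef_cons a c).
  by rewrite sum_coef_cons -hx addrC subrK.
Qed.

End LinearDependence.

Definition is_inner_product_mod (R : realType) (X : lmodType R)
    (g : X -> X -> R) (t : seq X) : Prop :=
  [/\ (forall x y, g x y = g y x),
      (forall a x y, g (a *: x) y = a * g x y),
      (forall x x' y, g (x + x') y = g x y + g x' y),
      (forall x, 0 <= g x x) &
      (forall x, g x x = 0 <-> lin_dep (x :: t))].

Definition gram_minor (R : realType) (X : lmodType R) (g : X -> X -> R)
    (z x y : X) : R :=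
  g x y * g z z - g x z * g z y.

Section GramMinor.
Variables (R : realType) (X : lmodType R) (g : X -> X -> R).
Hypotheses (gC : forall x y, g x y = g y x)
  (gZl : forall a x y, g (a *: x) y = a * g x y)
  (gDl : forall x x' y, g (x + x') y = g x y + g x' y)
  (g_ge0 : forall x, 0 <= g x x).

Lemma gBl x y v : g (x - y) v = g x v - g y v.
Proof. by rewrite gDl -scaleN1r gZl mulN1r. Qed.

Lemma gZr a x y : g x (a *: y) = a * g x y.
Proof. by rewrite gC gZl gC. Qed.

Lemma gBr x y v : g v (x - y) = g v x - g v y.
Proof. by rewrite gC gBl !(gC v). Qed.

Lemma isotropic_orthogonal w v : g w w = 0 -> g w v = 0.
Proof.
move=> gww0.
(* g u u = - g w v ^ 2 * (g v v + 2) for the vector u below. *)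
have := g_ge0 ((g v v + 1) *: w - g w v *: v).
rewrite !(gBl, gBr, gZl, gZr) gww0 (gC v w) => h.
by apply/eqP; rewrite -sqrf_eq0; have := g_ge0 v; nra.
Qed.

Lemma gram_minorC z x y : gram_minor g z x y = gram_minor g z y x.
Proof. by rewrite /gram_minor (gC x y) (gC x z) (gC z y); ring. Qed.

Lemma gram_minorZl z a x y : gram_minor g z (a *: x) y = a * gram_minor g z x y.
Proof. by rewrite /gram_minor !gZl; ring. Qed.

Lemma gram_minorDl z x x' y :
  gram_minor g z (x + x') y = gram_minor g z x y + gram_minor g z x' y.
Proof. by rewrite /gram_minor !gDl; ring. Qed.

Lemma gram_minor_swap x z : gram_minor g z x x = gram_minor g x z z.
Proof. by rewrite /gram_minor (gC x z); ring. Qed.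

Lemma gram_minor_proj z x : g z z != 0 ->
  gram_minor g z x x = g z z * g (x - (g x z / g z z) *: z) (x - (g x z / g z z) *: z).
Proof.
by move=> gzz; rewrite /gram_minor !(gBl, gBr, gZl, gZr) (gC z x); field.
Qed.

Lemma gram_minor_ge0 z x : 0 <= gram_minor g z x x.
Proof.
have [gzz0|gzz] := eqVneq (g z z) 0.
  by rewrite /gram_minor (isotropic_orthogonal x gzz0) gzz0 !mulr0 subr0.
by rewrite gram_minor_proj // mulr_ge0.
Qed.

Variable t : seq X.
Hypothesis g_null : forall x, g x x = 0 <-> lin_dep (x :: t).

Lemma gram_minor_null z x : gram_minor g z x x = 0 <-> lin_dep (x :: z :: t).
Proof.
have g_orth w v : lin_dep (w :: t) -> g w v = 0.
  by move/g_null/isotropic_orthogonal.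
split.
- have [gzz0|gzz] := eqVneq (g z z) 0.
    by move=> _; apply/lin_dep_consP; left; apply/g_null.
  rewrite gram_minor_proj // => /eqP; rewrite mulf_eq0 (negbTE gzz) => /eqP.
  case/g_null/lin_dep_consP => [dep_t|span_w]; apply/lin_dep_consP.
    by left; apply/lin_dep_consP; left.
  by right; apply/in_span_cons; exists (g x z / g z z).
- case/lin_dep_consP => [dep_zt|/in_span_cons [a span_w]].
    by rewrite /gram_minor (g_orth z x dep_zt) (g_orth z z dep_zt) !mulr0 subr0.
  have gx v : g x v = a * g z v.
    have /(g_orth _ v) : lin_dep (x - a *: z :: t) by apply/lin_dep_consP; right.
    by rewrite gBl gZl => /eqP; rewrite subr_eq0 => /eqP.
  by rewrite /gram_minor !gx (gC z x) gx; ring.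
Qed.

Lemma gram_minor_inner_product_mod z :
  is_inner_product_mod (gram_minor g z) (z :: t).
Proof.
split; [exact: gram_minorC | exact: gram_minorZl | exact: gram_minorDl |
        exact: gram_minor_ge0 | exact: gram_minor_null].
Qed.

End GramMinor.

Lemma inner_product_mod_nil (R : realType) (X : lmodType R) (ip : X -> X -> R) :
  is_inner_product ip -> is_inner_product_mod ip [::].
Proof.
case=> ipC ipZ ipD ip_ge0 ip_eq0; split=> // x; rewrite lin_dep1.
by split=> [/ip_eq0 | ->] //; rewrite -(scale0r 0) ipZ mul0r.
Qed.

Lemma iter2ip_inner_product_mod (R : realType) (X : lmodType R)
    (ip : X -> X -> R) (t : seq X) :
  is_inner_product ip -> is_inner_product_mod (fun x y => iter2ip ip x y t) t.
Proof.
move=> Hip; elim: t => [|z t]; first exact: inner_product_mod_nil.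
by case=> *; apply: gram_minor_inner_product_mod.
Qed.

Theorem theorem2p4 (R : realType) (X : lmodType R) (ip : X -> X -> R)
    (Hip : is_inner_product ip) (n : nat) (hn : (2 <= n)%N) :
  is_weak_n_inner_product n (iter2ip ip).
Proof.
have G t := iter2ip_inner_product_mod t Hip.
split.
- by move=> x s _; case: (G s) => _ _ _ ge0 null; split.
- by move=> x xn t _; case: (G t) => gC *; exact: (gram_minor_swap gC).
- by move=> x y s _; case: (G s).
- by move=> a x y s _; case: (G s).
- by move=> x x' y s _; case: (G s).
Qed.
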